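(* Let $k\ge2$ be an integer and let $(D,X)$ be an instance of 3NodeCover with $|D|=n$ and $\bigcup_{d\in D}d=X$. Construct a digraph $G$ as follows: a vertex $v_d$ for each $d\in D$ (the set of these is $V_1$), a vertex $w_t$ for each $t\in X$ (the set of these is $V_2$), an edge $(v_d,w_t)$ whenever $t\in d$, an extra vertex $a$ with an edge $(a,v)$ for every $v\in V_1$, and for each $v\in V_1$ new vertices $v_1,\dots,v_{k-1}$ and the directed path $a\to v_1\to v_2\to\cdots\to v_{k-1}\to v$ of length $k$. Then $$S_k(G)=OPT_{3NC}+kn+\sum_{d\in D}|d|,$$ where $OPT_{3NC}$ is the optimum of the 3NodeCover instance.
   Context: An instance of 3NodeCover consists of a collection $D$ of subsets of a universe $X$, each subset having at most $3$ elements and each element of $X$ lying in at most $2$ subsets; $OPT_{3NC}$ is the minimum size of a subcollection $M\subseteq D$ with $\bigcup M=X$. For a digraph $G$, a $k$-TC-spanner is a digraph on $V(G)$ whose edges lie in the transitive closure of $G$ such that its directed distance from $u$ to $v$ is at most $k$ whenever $v$ is reachable from $u$ in $G$; $S_k(G)$ is the minimum number of edges of a $k$-TC-spanner. *)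

From mathcomp Require Import all_boot.
Set Implicit Arguments. Unset Strict Implicit. Unset Printing Implicit Defensive.

Definition tc (V : finType) (G : rel V) (u v : V) : bool :=
  [exists w, G u w && connect G w v].

Fixpoint within (V : finType) (H : rel V) (m : nat) (u v : V) : bool :=
  match m with
  | 0 => u == v
  | m'.+1 => (u == v) || [exists w, H u w && within H m' w v]
  end.

Definition erel (V : finType) (E : {set V * V}) : rel V := fun x y => (x, y) \in E.

Definition is_TC_spanner (V : finType) (G : rel V) (k : nat) (E : {set V * V}) : bool :=
  [forall e in E, tc G e.1 e.2] &&
  [forall u, forall v, connect G u v ==> within (erel E) k u v].

(* S_k(G): minimum number of edges of a k-TC-spanner (the transitive closure itself is one,
   so the default value #|setT| is never the only candidate) *)
Definition S_k (V : finType) (k : nat) (G : rel V) : nat :=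
  \big[minn/#|[set: V * V]|]_(E : {set V * V} | is_TC_spanner G k E) #|E|.

(* The collection D is indexed by a finite type I; subset number i is d i. *)
Definition is_3NC_instance (I X : finType) (d : I -> {set X}) : Prop :=
  (forall i, #|d i| <= 3) /\ (forall x : X, #|[set i | x \in d i]| <= 2).

Definition is_cover (I X : finType) (d : I -> {set X}) (M : {set I}) : bool :=
  \bigcup_(i in M) d i == [set: X].

Definition OPT_3NC (I X : finType) (d : I -> {set X}) : nat :=
  \big[minn/#|I|]_(M : {set I} | is_cover d M) #|M|.

(* Vertices:  None            = a
              Some (inl (inl i)) = v_{d_i}          (V_1)
              Some (inl (inr t)) = w_t              (V_2)
              Some (inr (i, j))  = (v_{d_i})_{j+1},  j < k-1   (path vertices) *)
Notation redV I X k := (option ((I + X) + (I * 'I_k.-1)))%type.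

Definition red_edge (I X : finType) (d : I -> {set X}) (k : nat) : rel (redV I X k) :=
  fun x y =>
  match x, y with
  | None, Some (inl (inl _)) => true
  | None, Some (inr (_, j)) => nat_of_ord j == 0
  | Some (inl (inl i)), Some (inl (inr t)) => t \in d i
  | Some (inr (i, j)), Some (inr (i', j')) =>
      (i == i') && (nat_of_ord j' == (nat_of_ord j).+1)
  | Some (inr (i, j)), Some (inl (inl i')) =>
      (i == i') && ((nat_of_ord j).+1 == k.-1)
  | _, _ => false
  end.

Arguments red_edge {I X} d k _ _.

(* Grade the vertices of G by level: a at 0, the j-th vertex of a private path
   at j, v_d at k and w_t at k + 1. Every edge raises the level, and every edge
   except the shortcuts a -> v_d raises it by exactly one. Such forced edges
   lie in every TC-spanner, since a detour would have to pass through an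
   intermediate level; there are k n + sum_d |d| of them.
   Lower bound: in a k-TC-spanner E, a route of length at most k from a to w_t
   cannot climb the k + 1 levels by forced edges alone. Charging every
   non-forced edge to one subset (the gadget it leaves or enters) therefore
   turns E minus the forced edges into a cover, so |E| >= #forced + OPT.
   Upper bound: the forced edges plus the shortcuts a -> v_d for d in an
   optimal cover form a k-TC-spanner of exactly that size. *)

From mathcomp Require Import all_boot zify.
Set Implicit Arguments. Unset Strict Implicit. Unset Printing Implicit Defensive.

Lemma big_option (R : Type) (idx : R) (op : R -> R -> R) (T : finType)
    (F : option T -> R) :
  \big[op/idx]_(x : option T) F x = op (F None) (\big[op/idx]_(x : T) F (Some x)).
Proof. by rewrite ![index_enum _]unlock [@Finite.enum in LHS]unlock /= big_cons big_map. Qed.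

Lemma bigmin_le (T : finType) (P : pred T) (F : T -> nat) (m : nat) (x : T) :
  P x -> \big[minn/m]_(y | P y) F y <= F x.
Proof.
rewrite unlock; elim: (index_enum T) (mem_index_enum x) => // y r IH.
rewrite in_cons /= => /orP [/eqP <- -> | xr Px]; first exact: geq_minl.
by case: (P y); [apply: leq_trans (geq_minr _ _) _|]; apply: IH.
Qed.

Lemma bigmin_attained (T : finType) (P : pred T) (F : T -> nat) (m : nat) :
  \big[minn/m]_(x | P x) F x = m \/
  exists2 x, P x & F x = \big[minn/m]_(y | P y) F y.
Proof.
apply: (big_ind (fun y => y = m \/ exists2 x, P x & F x = y)); first by left.
  by move=> a b ha hb; case: (leqP a b).
by move=> i Pi; right; exists i.
Qed.

Lemma bigmin_eq (T : finType) (P : pred T) (F : T -> nat) (m t : nat) :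
  (exists2 x, P x & F x = t) -> (forall x, P x -> t <= F x) -> t <= m ->
  \big[minn/m]_(x | P x) F x = t.
Proof.
move=> [x Px <-] lb le_m; apply/eqP; rewrite eqn_leq bigmin_le //=.
by apply: (big_ind (fun y => F x <= y)) => // a b ha hb; rewrite leq_min ha hb.
Qed.

Lemma OPT_3NC_attained (I X : finType) (d : I -> {set X}) :
  \bigcup_(i : I) d i = [set: X] -> exists2 M, is_cover d M & #|M| = OPT_3NC d.
Proof.
move=> covering; rewrite /OPT_3NC.
have [-> | [M coverM optM]] := bigmin_attained (is_cover d) (fun M => #|M|) #|I|.
  exists setT; last by rewrite cardsT.
  by apply/eqP; rewrite -covering; apply: eq_bigl => i; rewrite in_setT.
by exists M.
Qed.

Lemma OPT_3NC_le (I X : finType) (d : I -> {set X}) (M : {set I}) :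
  is_cover d M -> OPT_3NC d <= #|M|.
Proof. exact: bigmin_le. Qed.

Section BoundedPaths.
Variables (V : finType) (H : rel V).

Lemma within_refl (m : nat) (u : V) : within H m u u.
Proof. by case: m => /=; rewrite eqxx. Qed.

Lemma within_cons (m : nat) (u z v : V) :
  H u z -> within H m z v -> within H m.+1 u v.
Proof. by move=> huz hzv /=; apply/orP; right; apply/existsP; exists z; rewrite huz. Qed.


Lemma within_mono (m n : nat) (u v : V) :
  m <= n -> within H m u v -> within H n u v.
Proof.
elim: m n u => [|m IH] n u /=; first by move=> _ /eqP ->; apply: within_refl.
case: n => // n le_mn /orP [/eqP -> | /existsP [w /andP [huw hwv]]].
  exact: within_refl.
exact: within_cons huw (IH _ _ le_mn hwv).
Qed.

Lemma within_edge (m : nat) (u v : V) : H u v -> within H m.+1 u v.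
Proof. by move=> huv; apply: (within_mono (m := 1)) (within_cons huv (within_refl 0 v)). Qed.

Lemma within_cat (m n : nat) (u z v : V) :
  within H m u z -> within H n z v -> within H (m + n) u v.
Proof.
elim: m u => [|m IH] u /=; first by move/eqP ->.
case/orP => [/eqP -> | /existsP [y /andP [huy hyz]]] hzv.
  by apply: (within_mono (n := (m + n).+1)) hzv; lia.
exact: (within_cons (m := m + n) huy (IH _ hyz hzv)).
Qed.

Lemma within_first_edge (m : nat) (u v : V) :
  within H m u v -> u != v -> exists2 w, H u w & within H m.-1 w v.
Proof.
case: m => [/= /eqP -> | m /= /orP [/eqP -> | /existsP [w /andP [huw hwv]]]];
  by [rewrite eqxx | exists w].
Qed.

End BoundedPaths.

Section Spanners.
Variables (V : finType) (G : rel V).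

Lemma spanner_edge_tc (k : nat) (E : {set V * V}) :
  is_TC_spanner G k E -> forall e, e \in E -> tc G e.1 e.2.
Proof. by case/andP => /forall_inP. Qed.

Lemma spanner_within (k : nat) (E : {set V * V}) (u v : V) :
  is_TC_spanner G k E -> connect G u v -> within (erel E) k u v.
Proof. by case/andP => _ /forallP/(_ u)/forallP/(_ v)/implyP. Qed.

Lemma tc_connect (u v : V) : tc G u v -> connect G u v.
Proof. by case/existsP => w /andP [huw hwv]; apply: connect_trans (connect1 huw) hwv. Qed.

Lemma within_connect (E : {set V * V}) (m : nat) (u v : V) :
  (forall e, e \in E -> tc G e.1 e.2) -> within (erel E) m u v -> connect G u v.
Proof.
move=> tcE; elim: m u => [|m IH] u /=; first by move/eqP ->.
case/orP => [/eqP -> // | /existsP [w /andP [huw hwv]]].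
exact: connect_trans (tc_connect (tcE _ huw)) (IH _ hwv).
Qed.

End Spanners.

(* A digraph graded by a rank that strictly increases along edges. An edge that
   raises the rank by exactly one cannot be bypassed by a longer path, so it
   belongs to every TC-spanner. *)
Section RankedDigraph.
Variables (V : finType) (G : rel V) (rank : V -> nat).
Hypothesis rank_edge : forall x y, G x y -> rank x < rank y.

Lemma connect_rank (x y : V) : connect G x y -> rank x <= rank y.
Proof.
move/connectP => [p xp ->]; elim: p x xp => [|z p IH] x //= /andP [hxz zp].
exact: leq_trans (ltnW (rank_edge hxz)) (IH _ zp).
Qed.

Lemma connect_rank_strict (x y : V) : connect G x y -> x = y \/ rank x < rank y.
Proof.
case/connectP => -[_ -> | z p /= /andP [hxz zp] ->]; [by left | right].
by apply: leq_trans (rank_edge hxz) (connect_rank _); apply/connectP; exists p.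
Qed.

Lemma tc_rank (x y : V) : tc G x y -> rank x < rank y.
Proof.
by case/existsP => w /andP [hxw hwy]; apply: leq_trans (rank_edge hxw) (connect_rank hwy).
Qed.

Lemma tight_edge_in_spanner (k : nat) (E : {set V * V}) (x y : V) :
  is_TC_spanner G k E -> G x y -> rank y = (rank x).+1 -> (x, y) \in E.
Proof.
move=> spanE hxy tight.
have x_neq_y : x != y by apply: contraTneq (rank_edge hxy) => ->; rewrite ltnn.
have [w hxw hwy] := within_first_edge (spanner_within spanE (connect1 hxy)) x_neq_y.
have lt_xw := tc_rank (spanner_edge_tc spanE hxw).
case: (connect_rank_strict (within_connect (spanner_edge_tc spanE) hwy)) => [<- // | lt_wy].
by move: lt_wy; rewrite tight ltnS leqNgt lt_xw.
Qed.

End RankedDigraph.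

(* Labelling the elements of [S] by [option I] produces at most [#|S|] labels
   in [I]; this bounds the number of subsets charged by a spanner. *)
Lemma card_labels (T I : finType) (S : {set T}) (label : T -> option I) :
  #|[set i | [exists e in S, label e == Some i]]| <= #|S|.
Proof.
rewrite -(card_imset _ (@Some_inj _)); apply: leq_trans (leq_imset_card label S).
apply: subset_leq_card; apply/subsetP => _ /imsetP [i + ->].
by rewrite inE => /exists_inP [e eS /eqP <-]; apply: imset_f.
Qed.

Section Reduction.
Variables (I X : finType) (d : I -> {set X}) (k : nat).
Hypothesis k_ge2 : 2 <= k.
Hypothesis covering : \bigcup_(i : I) d i = [set: X].
Local Notation V := (redV I X k).
Local Notation G := (red_edge d k).
Local Notation v i := (Some (inl (inl i)) : V).
Local Notation w t := (Some (inl (inr t)) : V).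
Local Notation path_vertex i j := (Some (inr (i, j)) : V).

Definition level (x : V) : nat :=
  match x with
  | None => 0
  | Some (inl (inl _)) => k
  | Some (inl (inr _)) => k.+1
  | Some (inr (_, j)) => j.+1
  end.

Lemma level_edge (x y : V) : G x y -> level x < level y.
Proof.
case: x => [[[i|s]|[i j]]|]; case: y => [[[i'|t]|[i' j']]|] //=.
- by case/andP => _ /eqP; lia.
- by case/andP => _ /eqP ->.
- by move=> _; lia.
Qed.

(* The forced edges: those raising the level by exactly one, i.e. every edge of
   [G] except the shortcuts [a -> v_d]. *)
Definition forced (x y : V) : bool := G x y && (level y == (level x).+1).
Definition forced_edges : {set V * V} := [set e | forced e.1 e.2].

Lemma forced_in_spanner (E : {set V * V}) :
  is_TC_spanner G k E -> forced_edges \subset E.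
Proof.
move=> spanE; apply/subsetP => -[x y]; rewrite inE /= => /andP [hxy /eqP tight].
exact: (tight_edge_in_spanner level_edge spanE hxy tight).
Qed.

Definition reach (x y : V) : bool :=
  match x, y with
  | None, _ => true
  | Some (inr (i, j)), Some (inr (i', j')) => (i == i') && (j <= j')
  | Some (inr (i, _)), Some (inl (inl i')) => i == i'
  | Some (inr (i, _)), Some (inl (inr t)) => t \in d i
  | Some (inl (inl i)), Some (inl (inl i')) => i == i'
  | Some (inl (inl i)), Some (inl (inr t)) => t \in d i
  | Some (inl (inr s)), Some (inl (inr t)) => s == t
  | _, _ => false
  end.

Lemma reach_refl (x : V) : reach x x.
Proof. by case: x => [[[i|t]|[i j]]|] /=; rewrite ?eqxx ?leqnn. Qed.

Lemma reach_edge (x y z : V) : G x y -> reach y z -> reach x z.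
Proof.
case: x => [[[i|s]|[i j]]|] //; case: y => [[[i'|s']|[i' j']]|] //=;
  case: z => [[[i''|t]|[i'' j'']]|] //=.
all: try by move=> ? /eqP <-.
all: try by case/andP => /eqP <- _ /eqP <-.
all: try by case/andP => /eqP <-.
by case/andP => /eqP <- /eqP -> /andP [-> lt_j]; apply: ltnW.
Qed.

Lemma connect_reach (x y : V) : connect G x y -> reach x y.
Proof.
case/connectP => p xp ->; elim: p x xp => [|z p IH] x /=; first by rewrite reach_refl.
by case/andP => hxz zp; apply: reach_edge hxz (IH _ zp).
Qed.

Lemma element_owned (t : X) : exists i, t \in d i.
Proof.
have : t \in [set: X] by rewrite in_setT.
by rewrite -covering => /bigcupP [i _ ti]; exists i.
Qed.

(* The subset charged for a spanner edge: the gadget the edge leaves, or, for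
   an edge leaving [a], the gadget it enters (some subset containing [t] for a
   shortcut [a -> w_t]). *)
Definition owner (e : V * V) : option I :=
  match e with
  | (Some (inl (inl i)), _) | (Some (inr (i, _)), _) => Some i
  | (None, Some (inl (inl i))) | (None, Some (inr (i, _))) => Some i
  | (None, Some (inl (inr t))) => [pick i | t \in d i]
  | _ => None
  end.

Lemma owner_contains (x y : V) (t : X) :
  tc G x y -> connect G y (w t) -> exists2 i, owner (x, y) = Some i & t \in d i.
Proof.
move=> xy yt; have := connect_reach (connect_trans (tc_connect xy) yt).
have := connect_reach yt; have := tc_rank level_edge xy.
case: x xy => [[[i|s]|[i j]]|] xy /=; try by exists i.
  by case/existsP: xy => z /andP [].
case: y {xy yt} => [[[i|s]|[i j]]|] /=; try by exists i.
  move=> _ /eqP <- _; case: pickP => [i ti | none]; first by exists i.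
  by have [i ti] := element_owned s; move: (none i); rewrite ti.
by rewrite ltnn.
Qed.

Definition charged (E : {set V * V}) : {set I} :=
  [set i | [exists e in E :\: forced_edges, owner e == Some i]].

(* A route of length at most [m] from [x] to [w_t]
   in a subgraph of the transitive closure either is long enough to climb level
   by level from [x] to [w_t] using forced edges only, or uses a non-forced edge,
   whose owner then contains [t]. *)
Lemma short_route_charged (E : {set V * V}) (m : nat) (x : V) (t : X) :
  (forall e, e \in E -> tc G e.1 e.2) -> within (erel E) m x (w t) ->
  (k.+1 - level x <= m) || [exists i in charged E, t \in d i].
Proof.
move=> tcE; elim: m x => [|m IH] x /=; first by move/eqP ->; rewrite subnn.
case/orP => [/eqP -> | /existsP [y /andP [xy yt]]]; first by rewrite subnn.
case/orP: (IH _ yt) => [climb | -> ]; last by rewrite orbT.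
have [forced_xy | unforced_xy] := boolP ((x, y) \in forced_edges).
  by move: forced_xy; rewrite inE /= => /andP [_ /eqP tight]; apply/orP; left; lia.
have [i own_i ti] := owner_contains (tcE _ xy) (within_connect tcE yt).
apply/orP; right; apply/exists_inP; exists i => //.
by rewrite in_set; apply/exists_inP; exists (x, y); rewrite ?own_i // in_setD unforced_xy.
Qed.

(* From [a], which sits [k + 1] levels below every [w_t], a route of length [k]
   cannot consist of forced edges only: the charged subsets form a cover. *)
Lemma charged_cover (E : {set V * V}) :
  is_TC_spanner G k E -> is_cover d (charged E).
Proof.
move=> spanE; apply/eqP/setP => t; rewrite in_setT; apply/bigcupP.
have [i ti] := element_owned t.
have a_t : connect G None (w t).
  have a_v : G None (v i) by [].
  have v_t : G (v i) (w t) by [].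
  exact: connect_trans (connect1 a_v) (connect1 v_t).
have := short_route_charged (spanner_edge_tc spanE) (spanner_within spanE a_t).
by rewrite subn0 ltnn => /exists_inP [j charged_j tj]; exists j.
Qed.

Lemma spanner_lower_bound (E : {set V * V}) :
  is_TC_spanner G k E -> #|forced_edges| + OPT_3NC d <= #|E|.
Proof.
move=> spanE; have forcedE := forced_in_spanner spanE.
rewrite -(cardsID forced_edges E) (setIidPr forcedE) leq_add2l.
apply: leq_trans (OPT_3NC_le (charged_cover spanE)) _.
exact: card_labels.
Qed.

Definition cover_spanner (M : {set I}) : {set V * V} :=
  forced_edges :|: [set (None, v i) | i in M].

Lemma forced_cover_spanner (M : {set I}) (x y : V) :
  forced x y -> erel (cover_spanner M) x y.
Proof. by move=> xy; rewrite /erel !inE xy. Qed.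

Definition path_start : 'I_k.-1 := Ordinal (ltac:(lia) : 0 < k.-1).
Definition path_end : 'I_k.-1 := Ordinal (ltac:(lia) : k.-2 < k.-1).

Lemma along_path (M : {set I}) (i : I) (n : nat) (j j' : 'I_k.-1) :
  j' = j + n :> nat ->
  within (erel (cover_spanner M)) n (path_vertex i j) (path_vertex i j').
Proof.
elim: n j => [|n IH] j jj'.
  by rewrite (_ : j' = j) ?within_refl //; apply: ord_inj; rewrite jj' addn0.
have lt_j1 : j.+1 < k.-1 by have := ltn_ord j'; lia.
apply: (within_cons (z := path_vertex i (Ordinal lt_j1))).
  by apply: forced_cover_spanner; rewrite /forced /= !eqxx.
by apply: IH; rewrite jj' /= addSnnS.
Qed.

Lemma path_to_gadget (M : {set I}) (i : I) (j : 'I_k.-1) :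
  within (erel (cover_spanner M)) (k.-2 - j).+1 (path_vertex i j) (v i).
Proof.
rewrite -addn1; apply: (within_cat (z := path_vertex i path_end)).
  by apply: along_path => /=; have := ltn_ord j; lia.
apply/within_edge/forced_cover_spanner.
by rewrite /forced /= eqxx; apply/andP; split; apply/eqP; lia.
Qed.

(* Every reachable pair is joined within [k] steps in [cover_spanner M]: this
   follows the explicit description of reachability, using a shortcut
   [a -> v_d] with [d \in M] only to reach some [w_t] from [a]. *)
Lemma cover_spanner_within (M : {set I}) (x y : V) :
  is_cover d M -> reach x y -> within (erel (cover_spanner M)) k x y.
Proof.
move=> coverM; set E := cover_spanner M.
have to_element i t : t \in d i -> erel E (v i) (w t).
  by move=> ti; apply: forced_cover_spanner; rewrite /forced /= ti eqxx.
case: x => [[[i|s]|[i j]]|]; case: y => [[[i'|t]|[i' j']]|] //=.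
- by move/eqP <-; apply: within_refl.
- by move/to_element => ti; apply: (within_mono (m := 1)) (within_edge 0 ti); lia.
- by move/eqP <-; apply: within_refl.
- move/eqP <-; apply: within_mono (path_to_gadget M i j); lia.
- move=> ti; apply: (within_mono (m := (k.-2 - j).+1 + 1)); first by have := ltn_ord j; lia.
  exact: within_cat (path_to_gadget M i j) (within_edge 0 (to_element _ _ ti)).
- case/andP => /eqP <- le_jj'; apply: (within_mono (m := j' - j)); first by have := ltn_ord j'; lia.
  by apply: along_path; rewrite subnKC.
- move=> _; apply: (within_mono (m := 1 + (k.-2 - path_start).+1)); first by rewrite /= subn0; lia.
  apply: within_cat (path_to_gadget M i' path_start).
  by apply/within_edge/forced_cover_spanner.
- move=> _; have : t \in \bigcup_(i in M) d i by rewrite (eqP coverM) in_setT.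
  case/bigcupP => i iM ti; apply: (within_mono (m := 2)); first lia.
  have shortcut : erel E None (v i) by rewrite /erel !inE imset_f ?orbT.
  exact: within_cons shortcut (within_edge 0 (to_element _ _ ti)).
- move=> _; apply: (within_mono (m := 1 + j')); first by have := ltn_ord j'; lia.
  apply: (within_cons (z := path_vertex i' path_start)); first exact: forced_cover_spanner.
  exact: along_path.
- by move=> _; apply: within_refl.
Qed.

Lemma cover_spanner_is_spanner (M : {set I}) :
  is_cover d M -> is_TC_spanner G k (cover_spanner M).
Proof.
move=> coverM; apply/andP; split.
  apply/forall_inP => -[x y]; rewrite !inE /= => /orP [/andP [xy _] | /imsetP [i _ xy]].
    by apply/existsP; exists y; rewrite xy connect0.
  by case: xy => -> ->; apply/existsP; exists (v i); rewrite /= connect0.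
apply/forallP => x; apply/forallP => y; apply/implyP => /connect_reach.
exact: cover_spanner_within.
Qed.

(* The shortcuts are not forced since [k >= 2]. *)
Lemma card_cover_spanner (M : {set I}) :
  #|cover_spanner M| = #|forced_edges| + #|M|.
Proof.
rewrite cardsU card_imset; last by move=> i i' [].
suff -> : forced_edges :&: [set (None, v i) | i in M] = set0.
  by rewrite cards0 subn0.
apply/setP => -[x y]; rewrite !inE.
apply/negbTE/andP => -[/andP [_ /eqP tight] /imsetP [i _ xy]].
by move: tight; case: xy => -> -> /=; lia.
Qed.

Lemma forced_out_root : #|[set y | forced None y]| = #|I|.
Proof.
have -> : [set y | forced None y] = (fun i => path_vertex i path_start) @: [set: I].
  apply/setP => -[[[i|t]|[i j]]|]; rewrite !inE /forced /=.
  - have -> : (k == 1) = false by apply/eqP; lia.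
    by apply/esym/imsetP => -[].
  - by apply/esym/imsetP => -[].
  - apply/andP/imsetP => [[/eqP j0 _] | [i' _ [_ ->]]] //.
    by exists i => //; congr (path_vertex i _); apply: ord_inj.
  - by apply/esym/imsetP => -[].
by rewrite card_imset ?cardsT // => i i' [].
Qed.

Lemma forced_out_gadget (i : I) : #|[set y | forced (v i) y]| = #|d i|.
Proof.
have -> : [set y | forced (v i) y] = [set w t | t in d i].
  apply/setP => -[[[i'|t]|[i' j]]|]; rewrite !inE /forced /=;
    try by apply/esym/imsetP => -[].
  rewrite eqxx andbT; apply/idP/imsetP => [ti | [t' t'i [->]] //].
  by exists t.
by rewrite card_imset // => t t' [].
Qed.

Lemma forced_out_element (t : X) : #|[set y | forced (w t) y]| = 0.
Proof.
have -> : [set y | forced (w t) y] = set0.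
  by apply/setP => -[[[?|?]|[? ?]]|]; rewrite !inE.
exact: cards0.
Qed.

Lemma forced_out_path (i : I) (j : 'I_k.-1) :
  #|[set y | forced (path_vertex i j) y]| = 1.
Proof.
have [lt_j1 | last_j] := ltnP j.+1 k.-1.
  rewrite -(cards1 (path_vertex i (Ordinal lt_j1) : V)); apply: eq_card.
  move=> -[[[i'|t]|[i' j']]|]; rewrite !inE /forced //=.
    have -> : (j.+1 == k.-1) = false by apply/negbTE/eqP; lia.
    by rewrite andbF.
  apply/idP/eqP => [/andP [/andP [/eqP <- /eqP j'j] _] | [<- ->]]; last by rewrite /= !eqxx.
  by congr (path_vertex i _); apply: ord_inj.
rewrite -(cards1 (v i : V)); apply: eq_card.
move=> -[[[i'|t]|[i' j']]|]; rewrite !inE /forced //=.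
  apply/idP/eqP => [/andP [/andP [/eqP <- _] _] // | [<-]].
  by rewrite eqxx /=; apply/andP; split; apply/eqP; have := ltn_ord j; lia.
have -> : (j' == j.+1 :> nat) = false by apply/negbTE/eqP; have := ltn_ord j'; lia.
by rewrite andbF.
Qed.

(* Summing the out-degrees: [n] edges leave [a], [|d|] leave [v_d], and one
   leaves each of the [(k - 1) n] path vertices. *)
Lemma card_forced_edges : #|forced_edges| = k * #|I| + \sum_(i : I) #|d i|.
Proof.
have -> : #|forced_edges| = \sum_(x : V) #|[set y | forced x y]|.
  rewrite -sum1dep_card -(pair_big_dep predT forced (fun _ _ => 1)).
  by apply: eq_bigr => x _; rewrite sum1dep_card.
rewrite big_option !big_sumType /= forced_out_root.
rewrite (eq_bigr _ (fun i _ => forced_out_gadget i)).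
have -> : \sum_(t : X) #|[set y | forced (w t) y]| = 0.
  by apply: big1 => t _; apply: forced_out_element.
have -> : \sum_(e : I * 'I_k.-1) #|[set y | forced (Some (inr e)) y]| = #|I| * k.-1.
  rewrite (eq_bigr (fun _ => 1)) => [|[i j] _]; last exact: forced_out_path.
  by rewrite sum1_card card_prod card_ord.
have -> : k * #|I| = #|I| + #|I| * k.-1 by rewrite -{1}(prednK (ltnW k_ge2)) mulSn mulnC.
by rewrite addn0 [_ + #|I| * _]addnC addnA.
Qed.

Lemma S_k_reduction : S_k k G = #|forced_edges| + OPT_3NC d.
Proof.
have [M coverM optM] := OPT_3NC_attained covering.
have size_M : #|cover_spanner M| = #|forced_edges| + OPT_3NC d.
  by rewrite card_cover_spanner optM.
apply: bigmin_eq.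
- by exists (cover_spanner M); [apply: cover_spanner_is_spanner | rewrite size_M].
- exact: spanner_lower_bound.
- by rewrite -size_M cardsT max_card.
Qed.
End Reduction.

Theorem mainTheorem15 (I X : finType) (d : I -> {set X}) (k : nat) :
  2 <= k ->
  is_3NC_instance d ->
  \bigcup_(i : I) d i = [set: X] ->
  S_k k (red_edge d k) = OPT_3NC d + k * #|I| + \sum_(i : I) #|d i|.
Proof.
move=> k_ge2 _ covering.
by rewrite (S_k_reduction k_ge2 covering) (card_forced_edges d k_ge2) addnC addnA.
Qed.
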